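(* Let $n,m\in\mathbb{N}$ be coprime and $\beta\in\mathbb{C}$. Then for every $u\in S(n,\beta)$, $\hat H_{n,m}u=u|_0\sum_{A\in X_m^\star}A$.
   Context: $\Gamma_0(n)=\{\begin{pmatrix}a&b\\c&d\end{pmatrix}\in SL(2,\mathbb{Z}):n\mid c\}$; $S(n,\beta)$ is the space of Maass cusp forms for $\Gamma_0(n)$ with spectral parameter $\beta$. $(f|_0h)(z)=f(hz)$, extended linearly. $B_m=\begin{pmatrix}m&0\\0&1\end{pmatrix}$. $\{R_j^{nm,n}\}_{j\in I_{nm,n}}$ is a system of representatives of the right cosets $\Gamma_0(nm)\backslash\Gamma_0(n)$ and $\hat H_{n,m}u=(u|_0B_m)|_0\sum_jR_j^{nm,n}$. $X_m^\star=\{\begin{pmatrix}c&b\\0&m/c\end{pmatrix}:c\ge1,\ c\mid m,\ 0\le b\le m/c-1,\ \gcd(c,b,m/c)=1\}$. *)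

From HB Require Import structures.
From mathcomp Require Import all_boot all_order all_algebra.
From mathcomp Require Import all_classical all_reals all_analysis.
From mathcomp Require Import complex.
Set Implicit Arguments. Unset Strict Implicit. Unset Printing Implicit Defensive.
Import Order.TTheory GRing.Theory Num.Theory.
Import numFieldNormedType.Exports.
Local Open Scope classical_set_scope.
Local Open Scope ring_scope.

Definition mx2 (a b c d : int) : 'M[int]_2 :=
  \matrix_(i < 2, j < 2)
    if i == 0 then (if j == 0 then a else b) else (if j == 0 then c else d).

Definition SL2Z (A : 'M[int]_2) : bool := \det A == 1.

Definition Gamma0 (n : nat) (A : 'M[int]_2) : bool :=
  let c := A 1 0 in SL2Z A && (n%:Z %| c)%Z.

Definition Bm (m : nat) : 'M[int]_2 := mx2 m%:Z 0 0 1.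

Section Action.
Variable R : realType.

Definition mobius (A : 'M[int]_2) (z : R[i]) : R[i] :=
  ((A 0 0)%:~R * z + (A 0 1)%:~R) / ((A 1 0)%:~R * z + (A 1 1)%:~R).

Definition slash0 (f : R[i] -> R[i]) (A : 'M[int]_2) : R[i] -> R[i] :=
  fun z => f (mobius A z).

(* linear extension to formal sums  sum_{A <- s} A  (s a finite list) *)
Definition slash0_sum (f : R[i] -> R[i]) (s : seq 'M[int]_2) : R[i] -> R[i] :=
  fun z => \sum_(A <- s) slash0 f A z.

Local Open Scope complex_scope.

Definition reP (u : R[i] -> R[i]) (x y : R) : R := complex.Re (u (x +i* y)).
Definition imP (u : R[i] -> R[i]) (x y : R) : R := complex.Im (u (x +i* y)).

Definition dx (f : R -> R -> R) (x y : R) : R := derive1 (fun t => f t y) x.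
Definition dy (f : R -> R -> R) (x y : R) : R := derive1 (fun t => f x t) y.

Definition upper (p : R * R) : Prop := 0 < p.2.

Definition C2_upper (f : R -> R -> R) : Prop :=
  (forall x y, 0 < y ->
     derivable (fun t => f t y) x 1 /\ derivable (fun t => f x t) y 1 /\
     derivable (fun t => dx f t y) x 1 /\ derivable (fun t => dx f x t) y 1 /\
     derivable (fun t => dy f t y) x 1 /\ derivable (fun t => dy f x t) y 1)
  /\ {within upper, continuous (fun p : R * R => dx (dx f) p.1 p.2)}
  /\ {within upper, continuous (fun p : R * R => dy (dx f) p.1 p.2)}
  /\ {within upper, continuous (fun p : R * R => dx (dy f) p.1 p.2)}
  /\ {within upper, continuous (fun p : R * R => dy (dy f) p.1 p.2)}.

Definition hlap (f : R -> R -> R) (x y : R) : R :=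
  - (y ^+ 2) * (dx (dx f) x y + dy (dy f) x y).

(* A cusp form is a C^2 (hence smooth, by
   elliptic regularity) Gamma_0(n)-invariant eigenfunction of Delta on the
   upper half plane which is bounded and whose constant terms at all cusps
   vanish: for every gamma in SL(2,Z), int_0^n u(gamma(x+iy)) dx = 0
   (x |-> u(gamma(x + iy)) is n-periodic since gamma T^n gamma^-1 is in
   Gamma(n) <= Gamma_0(n)). *)
Definition maass_cusp_form (n : nat) (beta : R[i]) (u : R[i] -> R[i]) : Prop :=
  [/\ (forall A z, Gamma0 n A -> 0 < complex.Im z -> u (mobius A z) = u z),
      C2_upper (reP u) /\ C2_upper (imP u),
      (forall x y, 0 < y ->
         (hlap (reP u) x y) +i* (hlap (imP u) x y)
         = (4%:R^-1 - beta ^+ 2) * u (x +i* y)),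
      (exists M : R, forall z, 0 < complex.Im z ->
         `|complex.Re (u z)| <= M /\ `|complex.Im (u z)| <= M)
    & (forall (g : 'M[int]_2) (y : R), SL2Z g -> 0 < y ->
         (\int[lebesgue_measure]_(x in `[0, n%:R]) complex.Re (u (mobius g (x +i* y))) = 0)%R
         /\ (\int[lebesgue_measure]_(x in `[0, n%:R]) complex.Im (u (mobius g (x +i* y))) = 0)%R)].

End Action.

Definition right_coset_reps (n m : nat) (I : finType) (R_ : I -> 'M[int]_2) : Prop :=
  (forall j, Gamma0 n (R_ j)) /\
  (forall g, Gamma0 n g ->
     exists! j, exists h, Gamma0 (n * m) h /\ g = h *m R_ j).

(* X_m^* = { (c b; 0 m/c) : c >= 1, c | m, 0 <= b <= m/c - 1, gcd(c,b,m/c) = 1 }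
   (listed without repetition) *)
Definition Xstar (m : nat) : seq 'M[int]_2 :=
  [seq mx2 cb.1%:Z cb.2%:Z 0 (m %/ cb.1)%:Z
  | cb <- [seq (c, b) | c <- divisors m, b <- iota 0 (m %/ c)]
  & gcdn (gcdn cb.1 cb.2) (m %/ cb.1) == 1%N].

Definition Hhat (R : realType) (n m : nat) (I : finType) (R_ : I -> 'M[int]_2)
  (u : R[i] -> R[i]) : R[i] -> R[i] :=
  fun z => \sum_(j : I) slash0 (slash0 u (Bm m)) (R_ j) z.

(* For gamma in Gamma_0(n) the matrix B_m gamma has determinant m, so by
   the Hermite normal form it equals g A with g in SL(2,Z) and A = (c b; 0 d) with
   c, d > 0 and 0 <= b < d.  The bottom row of gamma is (g_21 c, g_21 b + g_22 d):
   since gcd(n, c) = 1 this puts g in Gamma_0(n), and since that row is primitive,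
   gcd(c, b, d) = 1, i.e. A lies in X_m^*.  So each representative R_j determines a
   unique A_j in X_m^* with B_m R_j in Gamma_0(n) A_j, and u(B_m R_j z) = u(A_j z) by
   Gamma_0(n)-invariance of u (the only property of Maass cusp forms that is used).
   The map j |-> A_j is injective, because B_m gamma and B_m gamma' in one coset of
   Gamma_0(n) force gamma' gamma^-1 in Gamma_0(nm); it is onto X_m^*, because for
   A = (c b; 0 d) a Bezout relation for n b + k d and c n (coprime for a suitable k)
   yields gamma in Gamma_0(n) with B_m gamma in Gamma_0(n) A. *)

From HB Require Import structures.
From mathcomp Require Import all_boot all_order all_algebra.
From mathcomp Require Import all_classical all_reals all_analysis.
From mathcomp Require Import complex.
From mathcomp Require Import zify ring.
Set Implicit Arguments. Unset Strict Implicit. Unset Printing Implicit Defensive.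
Import Order.TTheory GRing.Theory Num.Theory.

Lemma coprime_prime_dvd a N : 0 < N ->
  (forall p, prime p -> p %| a -> p %| N -> False) -> coprime a N.
Proof.
move=> N_gt0 noP; apply: contraT => not_cop.
have g_gt1 : 1 < gcdn a N.
  by move: not_cop; rewrite /coprime; have := gcdn_gt0 a N; rewrite N_gt0 orbT; lia.
have pg := pdiv_dvd (gcdn a N).
case: (noP _ (pdiv_prime g_gt1)).
  exact: dvdn_trans pg (dvdn_gcdl _ _).
exact: dvdn_trans pg (dvdn_gcdr _ _).
Qed.

(* The shift [k] is the part of [N] made of the primes not dividing [a]. *)
Lemma exists_coprime_shift a d N : 0 < N -> coprime (gcdn a d) N ->
  exists k, coprime (a + k * d) N.
Proof.
move=> N_gt0 adN; set pi := [pred p | ~~ (p %| a)]; exists N`_pi.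
apply: coprime_prime_dvd => // p p_pr p_dvd p_N.
have p_k : (p %| N`_pi) = ~~ (p %| a).
  by have := pi_of_part pi N_gt0 p; rewrite !inE !mem_primes p_pr p_N N_gt0 part_gt0.
case/boolP: (p %| a) => p_a; last first.
  by move: p_dvd; rewrite dvdn_addl ?(negbTE p_a) // dvdn_mulr // p_k.
move: p_dvd; rewrite dvdn_addr // Euclid_dvdM // p_k p_a /= => p_d.
have : p %| gcdn (gcdn a d) N by rewrite !dvdn_gcd p_a p_d p_N.
by rewrite (eqP adN) dvdn1 => /eqP p1; rewrite p1 in p_pr.
Qed.

Local Open Scope ring_scope.

Lemma mx2E (A : 'M[int]_2) : A = mx2 (A 0 0) (A 0 1) (A 1 0) (A 1 1).
Proof.
apply/matrixP=> -[[|[|//]] ?] [[|[|//]] ?]; rewrite !mxE //=.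
all: by congr (A _ _); apply/val_inj.
Qed.

Lemma mx2_inj a b c d a' b' c' d' :
  mx2 a b c d = mx2 a' b' c' d' -> [/\ a = a', b = b', c = c' & d = d'].
Proof.
move=> E; have entry i j := congr1 (fun M : 'M[int]_2 => M i j) E.
by have := entry 0 0; have := entry 0 1; have := entry 1 0; have := entry 1 1; rewrite !mxE.
Qed.

Lemma mul_mx2 a b c d a' b' c' d' :
  mx2 a b c d *m mx2 a' b' c' d' =
  mx2 (a * a' + b * c') (a * b' + b * d') (c * a' + d * c') (c * b' + d * d').
Proof.
apply/matrixP=> i j; rewrite !mxE !big_ord_recr big_ord0 /= !mxE /= add0r.
by case: i => [[|[|//]] ?]; case: j => [[|[|//]] ?].
Qed.

Lemma det_mx2 a b c d : \det (mx2 a b c d) = a * d - b * c.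
Proof.
rewrite (expand_det_row _ 0) !big_ord_recr big_ord0 /= add0r.
by rewrite /cofactor !mxE /= !det_mx11 !mxE /= expr0 expr1 mul1r mulN1r mulrN.
Qed.

Lemma det2E (A : 'M[int]_2) : \det A = A 0 0 * A 1 1 - A 0 1 * A 1 0.
Proof. by rewrite {1}[A]mx2E det_mx2. Qed.

Lemma adj_mx2 a b c d : \adj (mx2 a b c d) = mx2 d (- b) (- c) a.
Proof.
apply/matrixP=> i j; rewrite !mxE /cofactor det_mx11 !mxE.
by case: i => [[|[|//]] ?]; case: j => [[|[|//]] ?]; rewrite /= ?(expr0, expr1, mul1r, mulN1r).
Qed.

Lemma mulKmx_adj (R : comPzRingType) k p (A : 'M[R]_k) (B : 'M[R]_(k, p)) :
  \det A = 1 -> \adj A *m (A *m B) = B.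
Proof. by move=> dA; rewrite mulmxA mul_adj_mx dA mul1mx. Qed.

Lemma mulmxK_adj (R : comPzRingType) k p (A : 'M[R]_k) (B : 'M[R]_(p, k)) :
  \det A = 1 -> B *m A *m \adj A = B.
Proof. by move=> dA; rewrite -mulmxA mul_mx_adj dA mulmx1. Qed.

Lemma mulmxKV_adj (R : comPzRingType) k p (A : 'M[R]_k) (B : 'M[R]_(p, k)) :
  \det A = 1 -> B *m \adj A *m A = B.
Proof. by move=> dA; rewrite -mulmxA mul_adj_mx dA mulmx1. Qed.

Lemma det_adj1 (R : comPzRingType) k (A : 'M[R]_k) : \det A = 1 -> \det (\adj A) = 1.
Proof.
move=> dA; have := congr1 determinant (mul_adj_mx A).
by rewrite det_mulmx dA mulr1 det_scalar expr1n.
Qed.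

Lemma Gamma0_det n A : Gamma0 n A -> \det A = 1.
Proof. by case/andP=> /eqP. Qed.

Lemma Gamma0_1 n : Gamma0 n 1%:M.
Proof. by rewrite /Gamma0 /SL2Z det1 mxE /= dvdz0. Qed.

Lemma Gamma0_mul n A B : Gamma0 n A -> Gamma0 n B -> Gamma0 n (A *m B).
Proof.
rewrite /Gamma0 /SL2Z det_mulmx => /andP[/eqP-> nA] /andP[/eqP-> nB].
rewrite mulr1 eqxx [A]mx2E [B]mx2E mul_mx2 mxE /=.
by rewrite rpredD //; [apply: dvdz_mulr | apply: dvdz_mull].
Qed.

Lemma Gamma0_adj n A : Gamma0 n A -> Gamma0 n (\adj A).
Proof.
case/andP=> /eqP dA nA; rewrite /Gamma0 /SL2Z det_adj1 //= [A in \adj A]mx2E adj_mx2.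
by rewrite mxE /= rpredN.
Qed.

Definition upper_reduced (A : 'M[int]_2) : bool :=
  [&& A 1 0 == 0, 0 < A 0 0 & 0 <= A 0 1 < A 1 1].

Lemma SL2_clear_lower (M : 'M[int]_2) : exists2 P, \det P = 1 & (P *m M) 1 0 = 0.
Proof.
have [/eqP g0 | g_neq0] := eqVneq (gcdz (M 0 0) (M 1 0)) 0.
  exists 1%:M; first exact: det1.
  by move: g0; rewrite mul1mx gcdz_eq0 => /andP[_ /eqP].
have [a' Ea] := dvdzP (dvdz_gcdl (M 0 0) (M 1 0)).
have [c' Ec] := dvdzP (dvdz_gcdr (M 0 0) (M 1 0)).
have [u [v Euv]] := Bezoutz (M 0 0) (M 1 0).
move: g_neq0 Ea Ec Euv; set g := gcdz _ _ => g_neq0 Ea Ec Euv.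
exists (mx2 u v (- c') a').
  by rewrite det_mx2; apply: (mulIf g_neq0); rewrite mul1r -[in RHS]Euv Ea Ec; ring.
by rewrite [M]mx2E mul_mx2 mxE /= Ea Ec; ring.
Qed.

Lemma sign_diag_pos (X : 'M[int]_2) : X 1 0 = 0 -> 0 < \det X ->
  exists2 e : int, e * e = 1 & (0 < e * X 0 0) && (0 < e * X 1 1).
Proof.
rewrite det2E => -> /=; rewrite mulr0 subr0 => dpos.
have [x00_gt0 | x00_le0] := ltrP 0 (X 0 0).
  by exists 1; rewrite ?mulr1 // !mul1r x00_gt0 -(pmulr_rgt0 _ x00_gt0).
exists (-1); rewrite ?mulrNN ?mulr1 // !mulN1r !oppr_gt0.
have x00_neq0 : X 0 0 != 0 by apply: contraTneq dpos => ->; rewrite mul0r ltxx.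
have x00_lt0 : X 0 0 < 0 by rewrite lt_neqAle x00_neq0.
by rewrite x00_lt0 -(nmulr_rgt0 _ x00_lt0).
Qed.

Lemma translate_upper_reduced (X : 'M[int]_2) : X 1 0 = 0 -> 0 < X 0 0 -> 0 < X 1 1 ->
  upper_reduced (mx2 1 (- divz (X 0 1) (X 1 1)) 0 1 *m X).
Proof.
move=> x10 x00 x11; rewrite [X]mx2E x10 mul_mx2 /upper_reduced !mxE /=.
rewrite !mul0r !mul1r !add0r mulr0 addr0 eqxx x00 mulNr -/(modz (X 0 1) (X 1 1)).
have x11_neq0 : X 1 1 != 0 by rewrite gt_eqF.
by rewrite modz_ge0 //= -{2}[X 1 1]gtr0_norm // ltz_mod.
Qed.

Lemma hermite_normal_form (M : 'M[int]_2) : 0 < \det M ->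
  exists2 P, \det P = 1 & upper_reduced (P *m M).
Proof.
move=> detM; have [P dP low] := SL2_clear_lower M.
have detPM : 0 < \det (P *m M) by rewrite det_mulmx dP mul1r.
have [e e2 /andP[pos0 pos1]] := sign_diag_pos low detPM.
set X := e%:M *m (P *m M).
have XE i j : X i j = e * (P *m M) i j by rewrite /X mul_scalar_mx mxE.
exists (mx2 1 (- divz (X 0 1) (X 1 1)) 0 1 *m (e%:M *m P)).
  by rewrite !det_mulmx det_mx2 det_scalar expr2 e2 dP; ring.
by rewrite -!mulmxA -/X; apply: translate_upper_reduced; rewrite XE ?low ?mulr0.
Qed.

Lemma upper_reduced_SL2_uniq (g A A' : 'M[int]_2) : \det g = 1 ->
  upper_reduced A -> upper_reduced A' -> g *m A = A' -> A = A'.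
Proof.
rewrite [g]mx2E [A]mx2E [A']mx2E det_mx2 /upper_reduced !mxE /=.
move: (g 0 0) (g 0 1) (g 1 0) (g 1 1) => x y z w dg.
move: (A 0 0) (A 0 1) (A 1 0) (A 1 1) (A' 0 0) (A' 0 1) (A' 1 0) (A' 1 1).
move=> c b ? d c' b' ? d' /and3P[/eqP-> c_gt0 bd] /and3P[/eqP-> c'_gt0 bd'].
rewrite mul_mx2 => /mx2_inj[xc xb_yd zc zb_wd].
rewrite !mulr0 !addr0 in xc zc.
have z0 : z = 0 by move: zc => /eqP; rewrite mulf_eq0 (gt_eqF c_gt0) orbF => /eqP.
subst z; rewrite mulr0 subr0 in dg.
have x_gt0 : 0 < x by rewrite -(pmulr_lgt0 _ c_gt0) xc.
have w_gt0 : 0 < w by rewrite -(pmulr_rgt0 _ x_gt0) dg.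
have [x1 w1] : x = 1 /\ w = 1 by nia.
subst x w; have y0 : y = 0 by nia.
by subst y; rewrite -xc -xb_yd -zb_wd; congr mx2; ring.
Qed.

Lemma XstarP m A : (0 < m)%N ->
  reflect (exists c b d : nat, [/\ A = mx2 c%:Z b%:Z 0 d%:Z, (c * d = m)%N, (b < d)%N
                                  & gcdn (gcdn c b) d = 1%N])
          (A \in Xstar m).
Proof.
move=> m_gt0; apply: (iffP mapP) => [[[c b]] | [c [b [d [-> cd bd cbd]]]]].
  rewrite mem_filter => /andP[/= /eqP cbd /allpairsPdep[c' [b' [c_m b_lt [Ec Eb]]]]] ->.
  subst c' b'; rewrite -dvdn_divisors // in c_m; rewrite mem_iota add0n leq0n in b_lt.
  by exists c, b, (m %/ c)%N; rewrite mulnC divnK.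
have c_gt0 : (0 < c)%N by move: m_gt0; rewrite -cd muln_gt0 => /andP[].
have md : (m %/ c = d)%N by rewrite -cd mulKn.
exists (c, b); last by rewrite /= md.
rewrite mem_filter /= -/(m %/ c)%N md cbd eqxx; apply/allpairsPdep; exists c, b.
by rewrite -dvdn_divisors // -cd dvdn_mulr // mulKn // mem_iota add0n leq0n bd.
Qed.

Lemma mem_Xstar m A : (0 < m)%N -> (A \in Xstar m) =
  [&& upper_reduced A, \det A == m%:Z & gcdz (gcdz (A 0 0) (A 0 1)) (A 1 1) == 1].
Proof.
move=> m_gt0; apply/XstarP/and3P => // [[c [b [d [-> cd bd cbd]]]] | ].
  have c_gt0 : (0 < c)%N by move: m_gt0; rewrite -cd muln_gt0 => /andP[].
  rewrite /upper_reduced det_mx2 !mxE /= mulr0 subr0 -PoszM cd eqxx.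
  by split => //; [apply/andP; split | apply/eqP; rewrite /gcdz /= cbd].
case=> /and3P[/eqP a10 a00 /andP[a01 a01_11]] /eqP dA cA.
have a11 : 0 <= A 1 1 by apply: le_trans a01 (ltW a01_11).
exists (absz (A 0 0)), (absz (A 0 1)), (absz (A 1 1)).
rewrite !gez0_abs ?(ltW a00) //; split => //.
- by rewrite {1}[A]mx2E a10.
- by apply/eqP; rewrite -eqz_nat PoszM !gez0_abs ?(ltW a00) // -dA det2E a10 mulr0 subr0.
- by rewrite -ltz_nat !gez0_abs.
by apply/eqP.
Qed.

Lemma det_Xstar m A : (0 < m)%N -> A \in Xstar m -> \det A = m%:Z.
Proof. by move=> m_gt0; rewrite mem_Xstar // => /and3P[_ /eqP]. Qed.

Lemma Xstar_uniq m : uniq (Xstar m).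
Proof.
rewrite map_inj_in_uniq ?filter_uniq ?allpairs_uniq_dep ?divisors_uniq //.
- by move=> c _; apply: iota_uniq.
- by move=> [? ?] [? ?] _ _ [-> ->].
by move=> [c b] [c' b'] _ _ /mx2_inj[[->] [->] _ _].
Qed.

Lemma Bm_mulmx m (M : 'M[int]_2) :
  Bm m *m M = mx2 (m%:Z * M 0 0) (m%:Z * M 0 1) (M 1 0) (M 1 1).
Proof. by rewrite /Bm {1}[M]mx2E mul_mx2; congr mx2; ring. Qed.

Lemma mulmx_Bm m (M : 'M[int]_2) :
  M *m Bm m = mx2 (M 0 0 * m%:Z) (M 0 1) (M 1 0 * m%:Z) (M 1 1).
Proof. by rewrite /Bm {1}[M]mx2E mul_mx2; congr mx2; ring. Qed.

Lemma det_Bm m : \det (Bm m) = m%:Z.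
Proof. by rewrite det_mx2 mulr1 mulr0 subr0. Qed.

Definition Gamma0_coset n (A M : 'M[int]_2) : Prop := exists2 g, Gamma0 n g & M = g *m A.

Lemma Bm_Gamma0_coset_Xstar n m (gam : 'M[int]_2) : (0 < m)%N -> coprime n m ->
  Gamma0 n gam -> exists2 A, A \in Xstar m & Gamma0_coset n A (Bm m *m gam).
Proof.
move=> m_gt0 nm /andP[/eqP dgam ngam].
have detBgam : \det (Bm m *m gam) = m%:Z by rewrite det_mulmx dgam det_Bm mulr1.
have [P dP] : exists2 P, \det P = 1 & upper_reduced (P *m (Bm m *m gam)).
  by apply: hermite_normal_form; rewrite detBgam ltz_nat.
set A := P *m _ => redA.
have Egam : Bm m *m gam = \adj P *m A by rewrite /A mulKmx_adj.
have dA : \det A = m%:Z by rewrite det_mulmx dP detBgam mul1r.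
have [/eqP a10 _ _] := and3P redA.
have [gam10 gam11] : gam 1 0 = \adj P 1 0 * A 0 0 /\
                     gam 1 1 = \adj P 1 0 * A 0 1 + \adj P 1 1 * A 1 1.
  move: Egam; rewrite Bm_mulmx {1}[\adj P]mx2E {1}[A]mx2E a10 mul_mx2.
  by case/mx2_inj=> _ _ -> ->; split; ring.
set c := A 0 0 in gam10 *; set b := A 0 1 in gam11 *; set d := A 1 1 in gam11 *.
exists A; last exists (\adj P) => //.
  rewrite mem_Xstar // redA dA eqxx /=.
  set e := gcdz _ _.
  have e_c : (e %| c)%Z by apply: dvdz_trans (dvdz_gcdl _ _) (dvdz_gcdl _ _).
  have e_b : (e %| b)%Z by apply: dvdz_trans (dvdz_gcdl _ _) (dvdz_gcdr _ _).
  have e_d : (e %| d)%Z by apply: dvdz_gcdr.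
  have : (e %| \det gam)%Z.
    by rewrite det2E gam10 gam11 rpredB ?dvdz_mull // ?rpredD ?dvdz_mull.
  by rewrite dgam dvdz1.
rewrite /Gamma0 /SL2Z det_adj1 //=.
have c_m : (absz c %| m)%N.
  by rewrite -[m]/(absz m%:Z) -dA det2E a10 mulr0 subr0 abszM dvdn_mulr.
by rewrite -(@Gauss_dvdzl _ _ c) -?gam10 // coprimezE (coprime_dvdr c_m).
Qed.

Lemma Gamma0_coset_mull n h A M :
  Gamma0 n h -> Gamma0_coset n A M -> Gamma0_coset n A (h *m M).
Proof. by move=> Gh [g Gg ->]; exists (h *m g); rewrite ?mulmxA ?Gamma0_mul. Qed.

Lemma Gamma0_coset_Xstar_uniq n m A A' M : (0 < m)%N ->
  A \in Xstar m -> A' \in Xstar m -> Gamma0_coset n A M -> Gamma0_coset n A' M -> A = A'.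
Proof.
move=> m_gt0; rewrite !mem_Xstar // => /andP[redA _] /andP[redA' _].
move=> [g Gg ->] [g' Gg' EM].
have [dg dg'] := (Gamma0_det Gg, Gamma0_det Gg').
apply: (upper_reduced_SL2_uniq (g := \adj g' *m g)) => //.
  by rewrite det_mulmx det_adj1 // dg mul1r.
by rewrite -mulmxA EM mulKmx_adj.
Qed.

Lemma Bm_conj_Gamma0 n m h : Gamma0 (n * m) h ->
  exists2 h', Gamma0 n h' & Bm m *m h = h' *m Bm m.
Proof.
case/andP=> /eqP dh /dvdzP[t h10].
exists (mx2 (h 0 0) (m%:Z * h 0 1) (t * n%:Z) (h 1 1)).
  rewrite /Gamma0 /SL2Z det_mx2 -dh det2E h10 PoszM mxE /= dvdz_mull ?dvdzz // andbT.
  by apply/eqP; ring.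
by rewrite Bm_mulmx mulmx_Bm !mxE /= h10 PoszM; congr mx2; ring.
Qed.

Lemma Gamma0_of_Bm_conj n m h h' : (0 < m)%N -> Gamma0 n h' ->
  Bm m *m h = h' *m Bm m -> Gamma0 (n * m) h.
Proof.
move=> m_gt0 /andP[/eqP dh' nh'] E.
have m_neq0 : m%:Z != 0 by rewrite gt_eqF // ltz_nat.
apply/andP; split.
  apply/eqP/(mulfI m_neq0); have := congr1 determinant E.
  by rewrite !det_mulmx det_Bm dh' mul1r mulr1.
move: E; rewrite Bm_mulmx mulmx_Bm => /mx2_inj[_ _ -> _].
by rewrite PoszM dvdz_mul.
Qed.

Lemma Gamma0_coset_Bm_inj n m A gam gam' : (0 < m)%N -> Gamma0 n gam ->
  Gamma0_coset n A (Bm m *m gam) -> Gamma0_coset n A (Bm m *m gam') ->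
  exists2 h, Gamma0 (n * m) h & gam' = h *m gam.
Proof.
move=> m_gt0 Ggam [g Gg Eg] [g' Gg' Eg'].
have [dgam dg] := (Gamma0_det Ggam, Gamma0_det Gg).
exists (gam' *m \adj gam); last by rewrite mulmxKV_adj.
apply: (@Gamma0_of_Bm_conj _ _ _ (g' *m \adj g)) => //.
  by rewrite Gamma0_mul ?Gamma0_adj.
by rewrite mulmxA Eg' -[Bm m](mulmxK_adj _ dgam) Eg !mulmxA mulmxKV_adj.
Qed.

Lemma Xstar_Gamma0_coset_Bm n m A : (0 < n)%N -> (0 < m)%N -> coprime n m ->
  A \in Xstar m -> exists2 gam, Gamma0 n gam & Gamma0_coset n A (Bm m *m gam).
Proof.
move=> n_gt0 m_gt0 nm /XstarP-/(_ m_gt0)[c [b [d [-> cd bd cbd]]]].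
have c_gt0 : (0 < c)%N by move: m_gt0; rewrite -cd muln_gt0 => /andP[].
have nd : coprime n d by apply: coprime_dvdr nm; rewrite -cd dvdn_mull.
have [k sk] : exists k, coprime (n * b + k * d) (c * n).
  apply: exists_coprime_shift; first by rewrite muln_gt0 c_gt0.
  rewrite gcdnC Gauss_gcdr; last by rewrite coprime_sym.
  rewrite coprimeMr; apply/andP; split.
    by rewrite /coprime gcdnAC (gcdnC d c) gcdnAC cbd.
  by rewrite coprime_sym (coprime_dvdr (dvdn_gcdl _ _) nd).
set s := (n * b + k * d)%N in sk.
have [u [v Euv]] := Bezoutz s%:Z (c * n)%N%:Z.
have uv1 : u * s%:Z + v * (c * n)%N%:Z = 1 by rewrite Euv; apply/eqP.
exists (mx2 u (- v) (c * n)%N%:Z s%:Z).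
  rewrite /Gamma0 /SL2Z det_mx2 mxE /= -uv1 PoszM dvdz_mull ?dvdzz // andbT.
  by apply/eqP; ring.
exists (mx2 (u * d%:Z) (- v * c%:Z - u * b%:Z) n%:Z k%:Z).
  rewrite /Gamma0 /SL2Z det_mx2 mxE /= dvdzz andbT -uv1 /s PoszD !PoszM.
  by apply/eqP; ring.
by rewrite Bm_mulmx mul_mx2 !mxE /= -cd /s PoszD !PoszM; congr mx2; ring.
Qed.

Section Mobius.
Variable R : realType.
Local Open Scope complex_scope.

Lemma intC (r : int) : (r%:~R : R[i]) = (r%:~R : R)%:C.
Proof. by rewrite rmorph_int. Qed.

Lemma mobius_den_neq0 (A : 'M[int]_2) (z : R[i]) : 0 < complex.Im z -> \det A != 0 ->
  (A 1 0)%:~R * z + (A 1 1)%:~R != 0.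
Proof.
case: z => x y /= y_gt0; rewrite det2E !intC /=; apply: contra => /eqP[].
rewrite !mul0r !subr0 !addr0 => re /eqP.
rewrite mulf_eq0 (gt_eqF y_gt0) orbF intr_eq0 => /eqP c0.
move: re; rewrite c0 mul0r add0r => /eqP; rewrite intr_eq0 => /eqP d0.
by rewrite d0 !mulr0 subrr.
Qed.

Lemma Im_div (p q : R[i]) : complex.Im (p / q) =
  (complex.Re q * complex.Im p - complex.Re p * complex.Im q) /
  (complex.Re q ^+ 2 + complex.Im q ^+ 2).
Proof. by case: p q => [a b] [c d] /=; ring. Qed.

Lemma sqr_ReIm_gt0 (q : R[i]) : q != 0 -> 0 < complex.Re q ^+ 2 + complex.Im q ^+ 2.
Proof.
case: q => a b q_neq0 /=; rewrite lt_def paddr_eq0 ?sqr_ge0 // !sqrf_eq0 addr_ge0 ?sqr_ge0 //.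
by rewrite andbT; apply: contra q_neq0 => /andP[/eqP-> /eqP->].
Qed.

Lemma mobius_Im_gt0 (A : 'M[int]_2) (z : R[i]) : 0 < \det A -> 0 < complex.Im z ->
  0 < complex.Im (mobius A z).
Proof.
move=> dA; case: z => x y /= y_gt0.
rewrite /mobius Im_div divr_gt0 ?sqr_ReIm_gt0 ?mobius_den_neq0 ?lt0r_neq0 //.
rewrite (_ : _ - _ = (\det A)%:~R * y) ?mulr_gt0 ?ltr0z //.
by rewrite det2E !intC /= intrB !intrM; ring.
Qed.

Lemma mobiusM (A B : 'M[int]_2) (z : R[i]) : 0 < complex.Im z -> \det B != 0 ->
  mobius (A *m B) z = mobius A (mobius B z).
Proof.
move=> z_gt0 /(mobius_den_neq0 z_gt0).
rewrite /mobius [A in A *m B]mx2E [B in _ *m B]mx2E mul_mx2 !mxE /= !(intrD, intrM).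
move: ((A 0 0)%:~R : R[i]) ((A 0 1)%:~R : R[i]) ((A 1 0)%:~R : R[i]) ((A 1 1)%:~R : R[i]).
move: ((B 0 0)%:~R : R[i]) ((B 0 1)%:~R : R[i]) ((B 1 0)%:~R : R[i]) ((B 1 1)%:~R : R[i]).
move=> p q r s a b c d den_neq0; set w := p * z + q.
have ->: a * (w / (r * z + s)) + b = (a * w + b * (r * z + s)) / (r * z + s) by field.
have ->: c * (w / (r * z + s)) + d = (c * w + d * (r * z + s)) / (r * z + s) by field.
by rewrite invf_div mulrA divfK //; congr (_ / _); rewrite /w; ring.
Qed.
End Mobius.

Lemma Gamma0_invariant_coset (R : realType) n (u : R[i] -> R[i]) A M z :
  (forall g w, Gamma0 n g -> 0 < complex.Im w -> u (mobius g w) = u w) ->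
  0 < complex.Im z -> 0 < \det A -> Gamma0_coset n A M -> u (mobius M z) = u (mobius A z).
Proof.
move=> u_inv z_gt0 dA [g Gg ->].
by rewrite mobiusM ?lt0r_neq0 // u_inv ?mobius_Im_gt0.
Qed.

Lemma big_perm_codom (R : Type) (idx : R) (op : Monoid.com_law idx) (T : eqType)
    (I : finType) (f : I -> T) (s : seq T) (F : T -> R) :
  perm_eq s (codom f) -> \big[op/idx]_(x <- s) F x = \big[op/idx]_(i : I) F (f i).
Proof. by move=> s_codom; rewrite (perm_big _ s_codom) big_image. Qed.

Section HeckeCosetReps.

Variables (n m : nat) (I : finType) (R_ : I -> 'M[int]_2).
Hypotheses (n_gt0 : (0 < n)%N) (m_gt0 : (0 < m)%N) (nm : coprime n m).
Hypothesis reps : right_coset_reps n m R_.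

Lemma coset_reps_inj h j k : Gamma0 (n * m) h -> R_ k = h *m R_ j -> j = k.
Proof.
move=> Gh Ek; have [j0 [_ uniq_j0]] := reps.2 _ (reps.1 k).
have <- : j0 = j by apply: uniq_j0; exists h.
by apply: uniq_j0; exists 1%:M; rewrite mul1mx Gamma0_1.
Qed.

Lemma Hecke_coset_bijection : exists2 sigma : I -> 'M[int]_2,
  perm_eq (Xstar m) (codom sigma) & forall j, Gamma0_coset n (sigma j) (Bm m *m R_ j).
Proof.
have [sigma Xsigma sigmaP] :=
  fin_all_exists2 (fun j => Bm_Gamma0_coset_Xstar m_gt0 nm (reps.1 j)).
exists sigma => //; apply: uniq_perm => [|| A]; first exact: Xstar_uniq.
  rewrite codomE map_inj_uniq ?enum_uniq // => j k Ejk.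
  have Ck : Gamma0_coset n (sigma j) (Bm m *m R_ k) by rewrite Ejk.
  have [h Gh Ek] := Gamma0_coset_Bm_inj m_gt0 (reps.1 j) (sigmaP j) Ck.
  exact: coset_reps_inj Gh Ek.
apply/idP/codomP => [XA | [j ->] //].
have [gam Ggam Cgam] := Xstar_Gamma0_coset_Bm n_gt0 m_gt0 nm XA.
have [j [[h [Gh Egam]] _]] := reps.2 _ Ggam.
have [h' Gh' Eh'] := Bm_conj_Gamma0 Gh.
exists j; apply: (Gamma0_coset_Xstar_uniq m_gt0 XA (Xsigma j) _ (sigmaP j)).
have -> : Bm m *m R_ j = \adj h' *m (Bm m *m gam).
  by rewrite Egam [Bm m *m (h *m _)]mulmxA Eh' -mulmxA mulKmx_adj // (Gamma0_det Gh').
exact: Gamma0_coset_mull (Gamma0_adj Gh') Cgam.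
Qed.

End HeckeCosetReps.

Theorem mainTheorem4 (R : realType) (n m : nat) (beta : R[i])
    (I : finType) (R_ : I -> 'M[int]_2) (u : R[i] -> R[i]) :
  (0 < n)%N -> (0 < m)%N -> coprime n m ->
  right_coset_reps n m R_ ->
  maass_cusp_form n beta u ->
  forall z : R[i], 0 < complex.Im z ->
    Hhat n m R_ u z = slash0_sum u (Xstar m) z.
Proof.
move=> n_gt0 m_gt0 nm reps [u_inv _ _ _ _] z z_gt0.
have [sigma Xsigma sigmaP] := Hecke_coset_bijection n_gt0 m_gt0 nm reps.
rewrite /Hhat /slash0_sum (big_perm_codom _ _ Xsigma); apply: eq_bigr => j _.
have sigmaX : sigma j \in Xstar m by rewrite (perm_mem Xsigma) codom_f.
have dR : \det (R_ j) != 0 by rewrite (Gamma0_det (reps.1 j)) oner_neq0.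
rewrite /slash0 -mobiusM //.
by apply: Gamma0_invariant_coset (sigmaP j) => //; rewrite (det_Xstar m_gt0 sigmaX) ltz_nat.
Qed.
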